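(* Let $G$ be an edge-transitive graph with an odd number of edges. Then there are no two distinct edges $\{a,b\}\neq\{c,d\}$ of $G$ such that there is perfect state transfer between $e_a-e_b$ and $e_c-e_d$.
   Context: With $L=\Delta-A$ the Laplacian of $G$ and $U(t)=\exp(itL)$, there is perfect state transfer between $e_a-e_b$ and $e_c-e_d$ if $U(t)(e_a-e_b)=\gamma(e_c-e_d)$ for some $t\ge0$ and $\gamma\in\mathbb{C}$, $|\gamma|=1$; $e_v$ is the standard basis vector of $v$. *)

From HB Require Import structures.
From mathcomp Require Import all_boot all_order all_algebra all_fingroup.
From mathcomp Require Import all_classical all_reals all_analysis.
From mathcomp Require Import complex.
Import numFieldTopology.Exports numFieldNormedType.Exports.
Set Implicit Arguments. Unset Strict Implicit. Unset Printing Implicit Defensive.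
Import Order.TTheory GRing.Theory Num.Theory.
Local Open Scope ring_scope.
Local Open Scope complex_scope.

Definition Cplx (R : realType) := R[i].
HB.instance Definition _ (R : realType) :=
  NormedModule.copy (Cplx R) ((Cplx R : numFieldType)^o).

Definition simple_graph (V : finType) (adj : rel V) : Prop :=
  symmetric adj /\ irreflexive adj.

Definition edges (V : finType) (adj : rel V) : {set {set V}} :=
  [set [set a; b] | a in V, b in V & adj a b].

Definition is_aut (V : finType) (adj : rel V) (s : {perm V}) : Prop :=
  forall x y, adj (s x) (s y) = adj x y.

Definition edge_transitive (V : finType) (adj : rel V) : Prop :=
  forall e1 e2, e1 \in edges adj -> e2 \in edges adj ->
    exists s : {perm V}, is_aut adj s /\ s @: e1 = e2.

Definition degree (V : finType) (adj : rel V) (v : V) : nat := #|[set w | adj v w]|.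

Definition laplacian (R : realType) (V : finType) (adj : rel V) (u v : V) : Cplx R :=
  (if u == v then (degree adj u)%:R else 0) - (if adj u v then 1 else 0).

Definition lap_apply (R : realType) (V : finType) (adj : rel V)
    (x : V -> Cplx R) : V -> Cplx R :=
  fun u => \sum_(v : V) laplacian R adj u v * x v.

Definition lap_pow_apply (R : realType) (V : finType) (adj : rel V) (k : nat)
    (x : V -> Cplx R) : V -> Cplx R := iter k (@lap_apply R V adj) x.

Definition basis_vec (R : realType) (V : finType) (a : V) : V -> Cplx R :=
  fun v => (v == a)%:R.

(* U(t) x = exp(itL) x = sum_k (it)^k / k! L^k x; "U(t) x = y" means that
   the exponential series, applied to x, converges (entrywise) to y. *)
Definition U_maps_to (R : realType) (V : finType) (adj : rel V) (t : R)
    (x y : V -> Cplx R) : Prop :=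
  forall u : V,
    ((series (fun k : nat =>
       (('i * t%:C) ^+ k / (k`!)%:R) * lap_pow_apply adj k x u : Cplx R))
      @ \oo --> y u)%classic.

Definition pst (R : realType) (V : finType) (adj : rel V) (x y : V -> Cplx R) : Prop :=
  exists t : R, 0 <= t /\
    exists gamma : Cplx R, `|gamma| = 1 /\
      U_maps_to adj t x (fun v => gamma * y v).

From HB Require Import structures.
From mathcomp Require Import all_boot all_order all_algebra all_fingroup.
From mathcomp Require Import all_classical all_reals all_analysis.
From mathcomp Require Import complex.
Import numFieldTopology.Exports numFieldNormedType.Exports.
Import Order.TTheory GRing.Theory Num.Theory.
Local Open Scope ring_scope.

(* Fix t and say that an edge e transfers to an edge f when U(t) x_e is a
   unimodular multiple of x_f (x_ab := e_a - e_b, up to sign).  As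
   |<x_f, x_f'>| = 2 only when f = f', an edge transfers to at most one edge.
   U(t) is symmetric for the bilinear form <x, y> = sum_u x_u y_u, which makes
   the relation symmetric, and it commutes with graph automorphisms.  So, by
   edge-transitivity, a single transfer e1 -> e2 with e1 <> e2 makes every edge
   transfer to some other edge: the relation is a perfect matching of the edge
   set, whose cardinality is then even. *)

Lemma perfect_matching_even_card {T : finType} {r : T -> T -> Prop} {A : {set T}} :
  (forall x, x \in A -> exists2 y, y \in A & r x y) ->
  (forall x y z, x \in A -> r x y -> r x z -> y = z) ->
  (forall x y, x \in A -> r x y -> r y x) ->
  (forall x, x \in A -> ~ r x x) ->
  ~~ odd #|A|.
Proof.
have [n] := ubnP #|A|; elim: n A => // n IH A ltAn total functional symm irrefl.
have [-> | [x xA]] := set_0Vmem A; first by rewrite cards0.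
have [y yA rxy] := total x xA.
have neq_yx : y != x by apply/eqP => eq_yx; apply: (irrefl x xA); rewrite -{2}eq_yx.
have ryx := symm x y xA rxy.
set B := A :\ x :\ y.
have BA z : z \in B -> z \in A by rewrite !inE => /and3P[].
have cardA : #|A| = #|B|.+2.
  by rewrite (cardsD1 x A) xA (cardsD1 y (A :\ x)) !inE neq_yx yA.
rewrite cardA /= negbK; apply: IH => [|z zB|z w v /BA|z w /BA|z /BA]; last 3 first.
- exact: functional.
- exact: symm.
- exact: irrefl.
- by move: ltAn; rewrite cardA ltnS => /ltnW.
(* The partner of z is neither x nor y, as these are each other's partners. *)
have zA := BA z zB; have [w wA rzw] := total z zA.
exists w => //; move: zB; rewrite !inE => /and3P[neq_zy neq_zx _].
rewrite wA andbT; apply/andP; split; apply/eqP => eq_w; subst w.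
- by move/eqP: neq_zx; apply; apply: (functional y) => //; apply: symm.
- by move/eqP: neq_zy; apply; apply: (functional x) => //; apply: symm.
Qed.

Lemma set2_eq_orient {T : finType} {a b c d : T} : a != b ->
  [set a; b] = [set c; d] -> (c = a /\ d = b) \/ (c = b /\ d = a).
Proof.
move=> neq_ab eq_ab_cd.
have /set2P[] : c \in [set a; b] by rewrite eq_ab_cd set21.
all: have /set2P[] : d \in [set a; b] by rewrite eq_ab_cd set22.
all: move=> eq_d eq_c; subst c d; try by [left | right].
all: move: (set21 a b) (set22 a b); rewrite eq_ab_cd finset.setUid.
all: by move=> /set1P eq_a /set1P eq_b; case/eqP: neq_ab; congruence.
Qed.

Section LaplacianSeries.
Context {R : realType} {V : finType} {adj : rel V}.
Implicit Types (x y p q z : V -> Cplx R) (s : {perm V}).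

(* Bilinear, not Hermitian: exp(itL) is symmetric (L is real symmetric) but not
   self-adjoint. *)
Definition dotv p q : Cplx R := \sum_u p u * q u.

Lemma dotv_basis_vecl a y : dotv (basis_vec R a) y = y a.
Proof.
rewrite /dotv (bigD1 a) //= /basis_vec eqxx mul1r big1 ?addr0 // => u /negPf->.
by rewrite mul0r.
Qed.

Lemma dotvC p q : dotv p q = dotv q p.
Proof. by apply: eq_bigr => u _; rewrite mulrC. Qed.

Lemma dotvZr p q (g : Cplx R) : dotv p (fun v => g * q v) = g * dotv p q.
Proof. by rewrite /dotv big_distrr; apply: eq_bigr => u _; rewrite mulrCA. Qed.

Lemma laplacianC : symmetric adj -> forall u v, laplacian R adj u v = laplacian R adj v u.
Proof. by move=> adj_sym u v; rewrite /laplacian eq_sym adj_sym; case: eqP => [->|]. Qed.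

Lemma degree_aut s : is_aut adj s -> forall v, degree adj (s v) = degree adj v.
Proof.
move=> s_aut v; rewrite /degree -(card_preimset _ (@perm_inj _ s)).
by apply: eq_card => w; rewrite !inE s_aut.
Qed.

Lemma laplacian_aut s : is_aut adj s ->
  forall u v, laplacian R adj (s u) (s v) = laplacian R adj u v.
Proof.
by move=> s_aut u v; rewrite /laplacian s_aut degree_aut // (inj_eq (@perm_inj _ s)).
Qed.

Lemma lap_pow_applyS k x u :
  lap_pow_apply adj k.+1 x u = \sum_v laplacian R adj u v * lap_pow_apply adj k x v.
Proof. by []. Qed.

Lemma dotv_lap_pow k p q : symmetric adj ->
  dotv q (lap_pow_apply adj k p) = dotv (lap_pow_apply adj k q) p.
Proof.
move=> adj_sym.
have dotv_lap y z : dotv z (lap_apply adj y) = dotv (lap_apply adj z) y.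
  rewrite /dotv /lap_apply; under eq_bigr do rewrite big_distrr /=.
  rewrite exchange_big /=; apply: eq_bigr => v _; rewrite big_distrl /=.
  by apply: eq_bigr => u _; rewrite laplacianC // mulrCA mulrA.
elim: k q => [//|k IH] q.
by rewrite /lap_pow_apply iterS dotv_lap -/(lap_pow_apply adj k _) IH iterSr.
Qed.

Lemma lap_powZ k (g : Cplx R) x u :
  lap_pow_apply adj k (fun v => g * x v) u = g * lap_pow_apply adj k x u.
Proof.
elim: k u => [//|k IH] u; rewrite !lap_pow_applyS big_distrr /=.
by apply: eq_bigr => v _; rewrite IH mulrCA.
Qed.

Lemma lap_pow_aut s k x u : is_aut adj s ->
  lap_pow_apply adj k (fun v => x (s v)) u = lap_pow_apply adj k x (s u).
Proof.
move=> s_aut; elim: k u => [//|k IH] u; rewrite !lap_pow_applyS.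
rewrite [RHS](reindex_inj (@perm_inj _ s)) /=.
by apply: eq_bigr => v _; rewrite IH laplacian_aut.
Qed.

Lemma cvg_dotv {T : Type} {F : set_system T} {FF : Filter F} q
    (f : T -> V -> Cplx R) (l : V -> Cplx R) :
  (forall u, (fun n => f n u) @ F --> l u)%classic ->
  ((fun n => dotv q (f n)) @ F --> dotv q l)%classic.
Proof.
move=> fl; apply: cvg_big => [|u _]; first exact: add_continuous.
exact: cvgMl_tmp.
Qed.

Context {coef : nat -> Cplx R}.

Definition lap_partial_sum x n : V -> Cplx R :=
  fun u => series (fun k => coef k * lap_pow_apply adj k x u) n.

(* [U_maps_to adj t] is the instance [coef k = (i t)^k / k!]. *)
Definition lap_series_to x y : Prop :=
  forall u, ((fun n => lap_partial_sum x n u : Cplx R) @ \oo --> y u)%classic.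

Lemma lap_series_toZ (g : Cplx R) {x y} : lap_series_to x y ->
  lap_series_to (fun v => g * x v) (fun v => g * y v).
Proof.
move=> xy u; apply: cvg_trans _ (cvgMl_tmp (a := g) (xy u)).
apply: near_eq_cvg; apply: nearW => n /=.
rewrite /lap_partial_sum /series /= big_distrr.
by apply: eq_bigr => k _; rewrite lap_powZ mulrCA.
Qed.

Lemma lap_series_to_aut {s x y} : is_aut adj s -> lap_series_to x y ->
  lap_series_to (fun v => x (s v)) (fun v => y (s v)).
Proof.
move=> s_aut xy u; apply: cvg_trans _ (xy (s u)).
apply: near_eq_cvg; apply: nearW => n /=; rewrite /lap_partial_sum /series /=.
by apply: eq_bigr => k _; rewrite lap_pow_aut.
Qed.

Lemma lap_series_to_uniq {x y y'} : lap_series_to x y -> lap_series_to x y' -> y =1 y'.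
Proof. by move=> xy xy' u; apply: cvg_unique (xy u) (xy' u). Qed.

Lemma dotv_lap_partial_sum x z n :
  dotv z (lap_partial_sum x n)
  = series (fun k => coef k * dotv z (lap_pow_apply adj k x)) n.
Proof.
rewrite /dotv /lap_partial_sum /series /=; under eq_bigr do rewrite big_distrr /=.
rewrite exchange_big /=; apply: eq_bigr => k _; rewrite big_distrr /=.
by apply: eq_bigr => u _; rewrite mulrCA.
Qed.

Lemma lap_series_to_dotv {p p' q q'} : symmetric adj ->
  lap_series_to p p' -> lap_series_to q q' -> dotv q p' = dotv p q'.
Proof.
move=> adj_sym pp' qq'.
have partial_sym n : dotv p (lap_partial_sum q n) = dotv q (lap_partial_sum p n).
  rewrite !dotv_lap_partial_sum; congr series; apply: funext => k.
  by rewrite dotv_lap_pow // dotvC.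
have qp' : ((fun n => dotv q (lap_partial_sum p n)) @ \oo --> dotv p q')%classic.
  by rewrite -(eq_cvg _ _ partial_sym); apply: cvg_dotv.
by apply: cvg_unique (cvg_dotv q _ _ pp') qp'.
Qed.

End LaplacianSeries.

Arguments lap_series_to {R V} adj coef x y.

Section EdgeTransfer.
Context {R : realType} {V : finType} {adj : rel V} {coef : nat -> Cplx R}.
Hypotheses (adj_sym : symmetric adj) (adj_irr : irreflexive adj).
Implicit Types (x y : V -> Cplx R).

Definition edge_vec (a b : V) : V -> Cplx R := fun v => basis_vec R a v - basis_vec R b v.

Lemma dotv_edge_vecl a b y : dotv (edge_vec a b) y = y a - y b.
Proof.
rewrite /dotv /edge_vec; under eq_bigr do rewrite mulrBl.
by rewrite sumrB -!/(dotv _ _) !dotv_basis_vecl.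
Qed.

Lemma edge_vecC a b : edge_vec b a = (fun v => -1 * edge_vec a b v).
Proof. by apply: funext => v; rewrite mulN1r opprB. Qed.

Lemma dotv_edge_vec_diag a b : a != b -> dotv (edge_vec a b) (edge_vec a b) = 2.
Proof.
move=> neq_ab; rewrite dotv_edge_vecl /edge_vec /basis_vec !eqxx.
by rewrite (negbTE neq_ab) eq_sym (negbTE neq_ab) subr0 sub0r opprK.
Qed.

Lemma norm_dotv_edge_vec {a b c d} : a != b -> c != d ->
  `|dotv (edge_vec a b) (edge_vec c d)| = 2 -> [set a; b] = [set c; d].
Proof.
move=> neq_ab neq_cd; rewrite dotv_edge_vecl /edge_vec /basis_vec.
have norm_ne2 (z : Cplx R) : z \in [:: 0; 1; -1] -> `|z| != 2.
  by rewrite !inE => /or3P[] /eqP->;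
    rewrite ?normrN ?normr0 ?normr1 ?(eqr_nat _ 0 2) ?(eqr_nat _ 1 2).
have [eq_ac|nac] := eqVneq a c; last have [eq_ad|nad] := eqVneq a d.
- subst c; rewrite (negbTE neq_cd) (eq_sym b a) (negbTE neq_ab).
  case: eqP => [->//|_] /eqP; apply/contraTeq => _; apply: norm_ne2.
  by rewrite subr0 subrr subr0 !inE eqxx orbT.
- subst d; rewrite (eq_sym b a) (negbTE neq_ab).
  case: eqP => [->|_] /eqP; first by rewrite finset.setUC.
  apply/contraTeq => _; apply: norm_ne2; by rewrite subr0 sub0r subr0 !inE eqxx !orbT.
- case: eqP => _; case: eqP => _ /eqP; apply/contraTeq => _; apply: norm_ne2.
  all: rewrite ?subrr ?subr0 ?sub0r ?opprK ?opprB ?subr0 !inE ?eqxx ?orbT //.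
Qed.

Lemma adj_neq {a b} : adj a b -> a != b.
Proof. by apply: contraTneq => ->; rewrite adj_irr. Qed.

Definition pst_at x y : Prop :=
  exists2 g : Cplx R, `|g| = 1 & lap_series_to adj coef x (fun v => g * y v).

Definition transfers (e f : {set V}) : Prop :=
  exists a b c d, [/\ e = [set a; b], f = [set c; d], adj a b, adj c d &
                      pst_at (edge_vec a b) (edge_vec c d)].

Lemma pst_at_edge_vecC a b y : pst_at (edge_vec b a) y -> pst_at (edge_vec a b) y.
Proof.
case=> g g1 xy; exists (- g); first by rewrite normrN.
have := lap_series_toZ (-1) xy; rewrite -edge_vecC.
by congr lap_series_to; apply: funext => v; rewrite mulrA mulN1r.
Qed.

Lemma transfers_from {e f a b} : transfers e f -> adj a b -> e = [set a; b] ->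
  exists c d, [/\ f = [set c; d], adj c d & pst_at (edge_vec a b) (edge_vec c d)].
Proof.
case=> a' [b' [c [d [-> -> _ cd xy]]]] ab /esym/(set2_eq_orient (adj_neq ab)).
by case=> -[<- <-]; exists c, d; split=> //; apply: pst_at_edge_vecC.
Qed.

Lemma set2_eq_of_dotv_phase {a b c d p q} {g g' : Cplx R} :
  adj a b -> adj c d -> adj p q -> `|g| = 1 -> `|g'| = 1 ->
  dotv (edge_vec c d) (fun v => g * edge_vec c d v)
    = dotv (edge_vec a b) (fun v => g' * edge_vec p q v) ->
  [set a; b] = [set p; q].
Proof.
move=> ab cd pq g1 g'1.
rewrite !dotvZr dotv_edge_vec_diag ?adj_neq // => /(congr1 Num.norm).
rewrite !normrM g1 g'1 !mul1r normr_nat => /esym.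
exact: norm_dotv_edge_vec (adj_neq ab) (adj_neq pq).
Qed.

Lemma transfers_functional {e f f'} : transfers e f -> transfers e f' -> f = f'.
Proof.
case=> a [b [c [d [-> -> ab cd [g g1 xy]]]]] tf'.
have [c' [d' [-> cd' [g' g'1 xy']]]] := transfers_from tf' ab erefl.
apply: (set2_eq_of_dotv_phase cd cd cd' g1 g'1).
congr dotv; apply: funext => v; exact: (lap_series_to_uniq xy xy' v).
Qed.

Lemma transfers_sym {e f h} : transfers e f -> transfers f h -> transfers f e.
Proof.
case=> a [b [c [d [-> -> ab cd [g g1 xy]]]]] tfh.
have [p [q [_ pq [g' g'1 yz]]]] := transfers_from tfh cd erefl.
have -> : [set a; b] = [set p; q].
  apply: set2_eq_of_dotv_phase ab cd pq g1 g'1 _.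
  exact: lap_series_to_dotv adj_sym xy yz.
by exists c, d, p, q; split=> //; exists g'.
Qed.

Lemma transfers_aut {s e f} :
  is_aut adj s -> transfers e f -> transfers (s @: e) (s @: f).
Proof.
move=> s_aut [a [b [c [d [-> -> ab cd [g g1 xy]]]]]].
have sV_aut : is_aut adj s^-1%g by move=> u v; rewrite -s_aut !permKV.
have edge_vec_perm u w v : edge_vec u w (s^-1%g v) = edge_vec (s u) (s w) v.
  have permV_eq z : (s^-1%g v == z) = (v == s z).
    by rewrite -(inj_eq (@perm_inj _ s)) permKV.
  by rewrite /edge_vec /basis_vec !permV_eq.
exists (s a), (s b), (s c), (s d); rewrite !imsetU1 !imset_set1 !s_aut; split=> //.
exists g => [//|]; have := lap_series_to_aut sV_aut xy.
by congr lap_series_to; apply: funext => v; rewrite edge_vec_perm.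
Qed.

Lemma transfers_edges {e f} : transfers e f -> e \in edges adj /\ f \in edges adj.
Proof.
by case=> a [b [c [d [-> -> ab cd _]]]]; split; apply: imset2_f; rewrite ?inE.
Qed.

Lemma transfers_even_edges {e1 e2} : edge_transitive adj ->
  transfers e1 e2 -> e1 != e2 -> ~~ odd #|edges adj|.
Proof.
move=> adj_trans t12 neq12; have [e1E e2E] := transfers_edges t12.
have has_partner e : e \in edges adj -> exists2 f, f \in edges adj & transfers e f.
  move=> eE; have [s [s_aut <-]] := adj_trans e1 e e1E eE.
  have te := transfers_aut s_aut t12.
  by exists (s @: e2); [exact: (transfers_edges te).2 | exact: te].
apply: (perfect_matching_even_card has_partner).
- by move=> e f f' _; apply: transfers_functional.
- move=> e f _ tef; have [h _ tfh] := has_partner f (transfers_edges tef).2.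
  exact: transfers_sym tef tfh.
- move=> e eE tee; have [s [s_aut se]] := adj_trans e e1 eE e1E.
  have := transfers_aut s_aut tee; rewrite se => t11.
  by move: neq12; rewrite (transfers_functional t11 t12) eqxx.
Qed.

End EdgeTransfer.

Arguments transfers {R V} adj coef e f.

Theorem mainTheorem15 (R : realType) (V : finType) (adj : rel V) :
  simple_graph adj ->
  edge_transitive adj ->
  odd #|edges adj| ->
  forall a b c d : V,
    adj a b -> adj c d -> [set a; b] != [set c; d] ->
    ~ pst adj (fun v => basis_vec R a v - basis_vec R b v)
              (fun v => basis_vec R c v - basis_vec R d v).
Proof.
move=> [adj_sym adj_irr] adj_trans odd_edges a b c d ab cd neq_edges [t [_ [g [g1 U]]]].
have t_ab_cd :
    transfers adj (fun k => ('i * t%:C) ^+ k / (k`!)%:R)%C [set a; b] [set c; d].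
  by exists a, b, c, d; split=> //; exists g.
have := transfers_even_edges adj_sym adj_irr adj_trans t_ab_cd neq_edges.
by rewrite odd_edges.
Qed.
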